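(* Let $(V,\sim)$ be a finite graph equipped with the side data $\mathrm{left}(\cdot),\mathrm{right}(\cdot)$ described in the context, and assume that $(V,\sim)$ admits a conformal model. Let $Q \subseteq V$ be a prime node of the modular decomposition tree of $(V,\sim)$, let $M_1,\ldots,M_n$ be the children of $Q$ in this tree, and let $U \subseteq Q$ be a set containing exactly one vertex from each $M_i$, $i \in \{1,\ldots,n\}$. Then the graph $(U,\sim)$, which is prime, has exactly two conformal models up to equivalence, and one of them is the reflection of the other.
   Context: Graph and side data. $(V,\sim)$ is a finite simple graph; we write $u \parallel v$ when $u \neq v$ and $u,v$ are non-adjacent, and for sets $X \sim Y$ (resp. $X \parallel Y$) means $x\sim y$ (resp. $x \parallel y$) for all $x\in X$, $y \in Y$. For every $u \in V$ we are given a partition of $\{v \in V : v \parallel u\}$ into two sets $\mathrm{left}(u)$ and $\mathrm{right}(u)$. (In the paper, $(V,\sim)$ is the overlap graph $G_{ov}$ of a circular-arc graph $G$ and these sets come from the arc model; the statement uses only the data above and the existence of a conformal model of $(V,\sim)$.) Conformal models. For $U \subseteq V$, a conformal model of $(U,\sim)$ is a circular word $\phi$ (a word considered up to cyclic rotation; two such words are equivalent if one is a rotation of the other) in which each of the letters $u^0,u^1$, $u \in U$, occurs exactly once, such that: (i) for distinct $u,v \in U$, the chords $\phi(u)$ (joining $u^0,u^1$) and $\phi(v)$ cross, i.e. the letters of $u$ and $v$ alternate in $\phi$, if and only if $u \sim v$; (ii) for $u,v \in U$ with $u \parallel v$, both letters of $v$ lie on the left side of $\phi(u)$ (i.e. among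 the letters met when reading $\phi$ cyclically forward from $u^0$ to $u^1$) if $v \in \mathrm{left}(u)$, and both lie on the right side of $\phi(u)$ (among the letters met reading forward from $u^1$ to $u^0$) if $v \in \mathrm{right}(u)$. The reflection of a circular word $\phi$ is obtained by reversing $\phi$ and exchanging $u^0$ and $u^1$ for every $u$. Modular decomposition. A module of a graph $(X,\sim)$ is a set $M \subseteq X$ such that every vertex of $X \setminus M$ is adjacent either to all or to none of the vertices of $M$; it is trivial if $|M| \le 1$ or $M = X$. A graph is prime if it has only trivial modules. A node $Q$ of the modular decomposition tree of $(V,\sim)$ is prime if its children $M_1,\ldots,M_n$ (the maximal strong modules properly contained in $Q$) are such that the quotient graph obtained from $(Q,\sim)$ by picking one vertex in each $M_i$ is prime. *)

From mathcomp Require Import all_boot.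
Set Implicit Arguments. Unset Strict Implicit. Unset Printing Implicit Defensive.

Section Defs.
Variable V : finType.

Definition is_module (adj : rel V) (X M : {set V}) : Prop :=
  M \subset X /\
  forall x, x \in X :\: M ->
    (forall m, m \in M -> adj x m) \/ (forall m, m \in M -> ~~ adj x m).

Definition prime_graph (adj : rel V) (X : {set V}) : Prop :=
  3 <= #|X| /\
  forall M, is_module adj X M -> #|M| <= 1 \/ M = X.

Definition strong_module (adj : rel V) (M : {set V}) : Prop :=
  M != set0 /\ is_module adj [set: V] M /\
  forall M', is_module adj [set: V] M' ->
    M' :&: M = set0 \/ M' \subset M \/ M \subset M'.

Definition child (adj : rel V) (Q M : {set V}) : Prop :=
  strong_module adj M /\ M \proper Q /\
  ~ (exists M', strong_module adj M' /\ M \proper M' /\ M' \proper Q).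

Definition child_transversal (adj : rel V) (Q U : {set V}) : Prop :=
  U \subset Q /\ forall M, child adj Q M -> #|U :&: M| = 1.

Definition prime_node (adj : rel V) (Q : {set V}) : Prop :=
  strong_module adj Q /\
  exists U, child_transversal adj Q U /\ prime_graph adj U.

(* Letters u^0 = (u,false), u^1 = (u,true). A circular word is a seq of
   letters, considered up to rotation. *)
Definition letters (U : {set V}) : seq (V * bool) :=
  [seq (u, b) | u <- enum U, b <- [:: false; true]].

Definition from0 (w : seq (V * bool)) (u : V) : seq (V * bool) :=
  rot (index (u, false) w) w.

Definition on_left (w : seq (V * bool)) (u : V) (x : V * bool) : bool :=
  let s := from0 w u in (0 < index x s) && (index x s < index (u, true) s).

Definition on_right (w : seq (V * bool)) (u : V) (x : V * bool) : bool :=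
  let s := from0 w u in (index (u, true) s < index x s) && (index x s < size s).

Definition crosses (w : seq (V * bool)) (u v : V) : bool :=
  on_left w u (v, false) != on_left w u (v, true).

(* side u v = true  iff  v \in left(u)   (meaningful when u || v);
   side u v = false iff  v \in right(u). *)
Definition conformal_model (adj : rel V) (side : V -> V -> bool)
  (U : {set V}) (w : seq (V * bool)) : Prop :=
  perm_eq w (letters U) /\
  (forall u v, u \in U -> v \in U -> u != v -> crosses w u v = adj u v) /\
  (forall u v, u \in U -> v \in U -> u != v -> ~~ adj u v ->
     if side u v then on_left w u (v, false) && on_left w u (v, true)
     else on_right w u (v, false) && on_right w u (v, true)).

Definition circ_equiv (w1 w2 : seq (V * bool)) : Prop :=
  exists k, w2 = rot k w1.

Definition reflection (w : seq (V * bool)) : seq (V * bool) :=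
  rev [seq (x.1, ~~ x.2) | x <- w].

End Defs.

(* Any two transversals of the children of Q induce isomorphic graphs, so U is prime
   because the transversal given by the primality of Q is.

   Restricting a conformal model of V to the letters of U gives a conformal model w1 of U,
   and its reflection is another one; they are not rotations of each other since reflecting
   moves v^0 to the other side of the chord of u for every edge uv.  Given any conformal
   model w of U, label each edge yz by whether w and w1 put z^0 on the same side of the
   chord of y.  Two crossing chords determine each other's sides, so the label is symmetric;
   for an induced path z - y - z' the sides of the non-crossing chords z, z' are fixed by
   [side], which forces the labels of yz and yz' to agree.  In a prime graph such a labelling
   is constant: otherwise the triangles whose third edge is labelled differently from the
   other two would span a nontrivial module.  So w agrees with w1 or with its reflection
   on the sides of all chords.  Finally, in a connected graph these sides determine the
   circular word up to rotation: walking along the two words from a common letter, a first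
   disagreement would yield an arc containing both ends or no end of every chord, hence a
   cut of the graph crossed by no edge. *)

From Stdlib Require Import ClassicalEpsilon.
From mathcomp Require Import all_boot zify.

Set Implicit Arguments.
Unset Strict Implicit.
Unset Printing Implicit Defensive.

Definition cyc_ordered (i j k : nat) : bool := [|| i < j < k, j < k < i | k < i < j].

Lemma cyc_ordered0 i j : 0 < i -> cyc_ordered 0 i j = (i < j).
Proof. by rewrite /cyc_ordered; lia. Qed.

(* Positions in a word starting with u^0, where u^1 is at m, v^0 v^1 at a b and x^0 x^1 at c d:
   the chord u crosses v and x, which do not cross each other. *)
Lemma cyc_ordered_claw m a b c d : 0 < a -> 0 < b -> 0 < c -> 0 < d ->
  m != a -> m != b -> m != c -> m != d -> a != c -> a != d -> b != c -> b != d ->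
  (a < m) != (b < m) -> (c < m) != (d < m) -> cyc_ordered a c b = cyc_ordered a d b ->
  (a < m) (+) (c < m) = (cyc_ordered a c b == cyc_ordered c a d).
Proof. by rewrite /cyc_ordered; case: (ltnP a m); case: (ltnP c m) => ? ? /=; lia. Qed.

Section CyclicOrder.
Variable T : eqType.
Implicit Types (w : seq T) (x y z t a c d : T).

Definition between w x y z := cyc_ordered (index x w) (index y w) (index z w).

Definition separates w x y c d := between w x c y != between w x d y.

Lemma index_eq w : {in w &, forall x y, (index x w == index y w) = (x == y)}.
Proof. by move=> x y xw yw; rewrite (inj_in_eq (@index_inj _ x w)). Qed.

Lemma between_rotl w x y z : between w x y z = between w y z x.
Proof. by rewrite /between /cyc_ordered orbC -orbA. Qed.

Lemma between_xxy w x z : between w x x z = false.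
Proof. by rewrite /between /cyc_ordered; lia. Qed.

Lemma between_xyy w x y : between w x y y = false.
Proof. by rewrite /between /cyc_ordered; lia. Qed.

Lemma between_swap w : {in w & &, forall x y z,
  x != y -> y != z -> z != x -> between w x z y = ~~ between w x y z}.
Proof.
move=> x y z xw yw zw; rewrite -!(@index_eq w) //.
by rewrite /between /cyc_ordered; lia.
Qed.

Lemma between_next w x z t : index z w = (index x w).+1 ->
  x \in w -> z \in w -> t \in w -> t != x -> t != z -> between w x z t.
Proof.
move=> xz xw zw tw; rewrite -!(@index_eq w) // xz.
by rewrite /between /cyc_ordered; lia.
Qed.

Lemma between_mid_next w x z t t' : index z w = (index x w).+1 ->
  x \in w -> z \in w -> t \in w -> t' \in w ->
  t != x -> t != z -> t' != x -> t' != z -> between w t x t' = between w t z t'.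
Proof.
move=> xz xw zw tw t'w; rewrite -!(@index_eq w) // xz.
by rewrite /between /cyc_ordered; lia.
Qed.

Lemma separatesC w x y c d : x \in w -> y \in w -> c \in w -> d \in w ->
  x != y -> x != c -> x != d -> y != c -> y != d -> c != d ->
  separates w x y c d = separates w c d x y.
Proof.
move=> xw yw cw dw; rewrite -!(@index_eq w) //.
by rewrite /separates /between /cyc_ordered; lia.
Qed.

Lemma separates_between w x x' y y' : x \in w -> x' \in w -> y \in w -> y' \in w ->
  x != x' -> x != y -> x != y' -> x' != y -> x' != y' -> y != y' ->
  separates w x x' y y' -> between w y x y' = ~~ between w x y x'.
Proof.
move=> xw x'w yw y'w; rewrite -!(@index_eq w) //.
by rewrite /separates /between /cyc_ordered; lia.
Qed.

Lemma between_nonseparating w a z c c' d d' :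
  c \in w -> c' \in w -> d \in w -> d' \in w ->
  c != d -> c != d' -> c' != d -> c' != d' ->
  between w a c z -> between w a c' z -> ~~ between w a d z -> ~~ between w a d' z ->
  ~~ separates w c c' d d'.
Proof.
move=> cw c'w dw d'w; rewrite -!(@index_eq w) //.
by rewrite /separates /between /cyc_ordered; lia.
Qed.

Lemma index_rot w k y : uniq w -> y \in w -> k < size w ->
  index y (rot k w) = if k <= index y w then index y w - k else size w - k + index y w.
Proof.
move=> Uw yw lt_k; have size_take_k : size (take k w) = k by rewrite size_take lt_k.
have : uniq (take k w ++ drop k w) by rewrite cat_take_drop.
rewrite cat_uniq => /and3P [_ disj _].
have -> : index y w = index y (take k w ++ drop k w) by rewrite cat_take_drop.
rewrite /rot !index_cat size_take_k size_drop.
have [y_take | y_drop] := boolP (y \in take k w).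
  have -> : y \in drop k w = false by apply: contraTF y_take => y_drop; exact: (hasPn disj).
  by have := index_mem y (take k w); rewrite y_take size_take_k /= => lt_i; rewrite leqNgt lt_i.
have -> : y \in drop k w = true.
  by move: yw; rewrite -{1}(cat_take_drop k w) mem_cat (negbTE y_drop).
by rewrite leq_addr addKn.
Qed.

Lemma between_rot w k : uniq w ->
  {in w & &, forall x y z, between (rot k w) x y z = between w x y z}.
Proof.
move=> Uw x y z xw yw zw; have [lt_k|ge_k] := ltnP k (size w); last by rewrite rot_oversize.
rewrite /between !index_rot //.
move: (index_mem x w) (index_mem y w) (index_mem z w); rewrite xw yw zw /cyc_ordered.
by case: (leqP k (index x w)); case: (leqP k (index y w)); case: (leqP k (index z w)); lia.
Qed.

Lemma index_rev w y : uniq w -> y \in w -> index y (rev w) = (size w).-1 - index y w.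
Proof.
move=> Uw yw; have lt_y := yw; rewrite -index_mem in lt_y.
have lt_i : (size w).-1 - index y w < size (rev w) by rewrite size_rev; lia.
rewrite -{1}(index_uniq y lt_i) ?rev_uniq // nth_rev; last by rewrite size_rev in lt_i.
by rewrite (_ : size w - _ = index y w) ?nth_index //; lia.
Qed.

Lemma between_rev w : uniq w -> {in w & &, forall x y z, between (rev w) x y z = between w z y x}.
Proof.
move=> Uw x y z xw yw zw; rewrite /between !index_rev //.
move: (index_mem x w) (index_mem y w) (index_mem z w); rewrite xw yw zw /cyc_ordered.
lia.
Qed.

Lemma between_filter (p : pred T) w x y z : p x -> p y -> p z ->
  between (filter p w) x y z = between w x y z.
Proof.
have index_filter_lt y1 y2 : p y1 -> p y2 ->
    (index y1 (filter p w) < index y2 (filter p w)) = (index y1 w < index y2 w).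
  move=> py1 py2; elim: w => [|t w IHw] //=.
  have [pt|npt] /= := boolP (p t); first by case: (t == y1); case: (t == y2).
  by rewrite !ifN ?ltnS //; apply: contraNneq npt => ->.
by move=> px py pz; rewrite /between /cyc_ordered !index_filter_lt.
Qed.

End CyclicOrder.


Definition other_end (T : Type) (y : T * bool) : T * bool := (y.1, ~~ y.2).

Lemma other_endK (T : Type) : involutive (@other_end T).
Proof. by case=> y b; rewrite /other_end negbK. Qed.

Lemma other_end_inj (T : Type) : injective (@other_end T).
Proof. exact: can_inj (@other_endK T). Qed.

Lemma mem_map_other_end (T : eqType) (w : seq (T * bool)) y :
  (y \in map (@other_end T) w) = (other_end y \in w).
Proof. by rewrite -{1}(other_endK y) mem_map //; exact: other_end_inj. Qed.

Lemma letter_cases (T : Type) (x y : T * bool) : y.1 = x.1 -> y = x \/ y = other_end x.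
Proof. by case: x y => [a [] ] [c [] ] /= ->; auto. Qed.

Lemma letter_neq (T : eqType) (u v : T) (b c : bool) : u != v -> (u, b) != (v, c).
Proof. by move=> uv; apply: contraNneq uv => -[-> _]. Qed.

Lemma fst_neq (T1 T2 : eqType) (x y : T1 * T2) : x.1 != y.1 -> x != y.
Proof. by apply: contraNneq => ->. Qed.

Lemma other_end_neq (T : eqType) (x : T * bool) : other_end x != x.
Proof. by case: x => u [] /=; apply/eqP. Qed.

Lemma neq_other_end (T : eqType) (x : T * bool) : x != other_end x.
Proof. by rewrite eq_sym other_end_neq. Qed.

Lemma letter_neq_end (T : eqType) (u : T) (b c : bool) : b != c -> (u, b) != (u, c).
Proof. by move=> bc; apply: contraNneq bc => -[->]. Qed.

Section Chords.
Variable V : finType.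
Implicit Types (w : seq (V * bool)) (u : V) (x y z : V * bool).

Lemma reflectionE w : reflection w = rev (map (@other_end V) w).
Proof. by []. Qed.

Lemma mem_reflection w y : (y \in reflection w) = (other_end y \in w).
Proof. by rewrite reflectionE mem_rev mem_map_other_end. Qed.

Lemma reflection_uniq w : uniq (reflection w) = uniq w.
Proof. by rewrite reflectionE rev_uniq (map_inj_uniq (@other_end_inj V)). Qed.

Lemma between_reflection w x y z : uniq w ->
  other_end x \in w -> other_end y \in w -> other_end z \in w ->
  between (reflection w) x y z = between w (other_end z) (other_end y) (other_end x).
Proof.
move=> Uw xw yw zw; have index_map_other t : index t (map (@other_end V) w) = index (other_end t) w.
  by rewrite -{1}(other_endK t) index_map //; exact: other_end_inj.
rewrite reflectionE between_rev ?(map_inj_uniq (@other_end_inj V)) ?mem_map_other_end //.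
by rewrite /between !index_map_other.
Qed.

Lemma on_leftE w u y : uniq w -> (u, false) \in w -> (u, true) \in w -> y \in w ->
  on_left w u y = between w (u, false) y (u, true).
Proof.
move=> Uw u0w u1w yw; rewrite -(between_rot (index (u, false) w)) //.
rewrite /on_left /from0 /between rot_index //= eqxx /cyc_ordered.
by rewrite ltn0 andbF orbF.
Qed.

Lemma on_rightE w u y : uniq w -> (u, false) \in w -> (u, true) \in w -> y \in w -> y.1 != u ->
  on_right w u y = ~~ on_left w u y.
Proof.
move=> Uw u0w u1w yw yu; rewrite /on_right /on_left /from0; set s := rot _ w.
have ys : y \in s by rewrite mem_rot.
have s_u0 : index (u, false) s = 0 by rewrite /s rot_index //= eqxx.
have [y_u0 y_u1] : index y s != index (u, false) s /\ index y s != index (u, true) s.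
  by rewrite !(@index_eq _ s) ?mem_rot //; split; apply: contraNneq yu => ->.
move: (index_mem y s) y_u0 y_u1; rewrite ys s_u0.
by move: (index y s) (index (u, true) s) (size s) => i j n; lia.
Qed.

Lemma on_left_rot w k u y : uniq w -> (u, false) \in w -> (u, true) \in w -> y \in w ->
  on_left (rot k w) u y = on_left w u y.
Proof. by move=> Uw *; rewrite !on_leftE ?rot_uniq ?mem_rot ?between_rot. Qed.

Lemma on_left_filter (p : pred (V * bool)) w u y :
  uniq w -> (u, false) \in w -> (u, true) \in w -> y \in w -> p (u, false) -> p (u, true) -> p y ->
  on_left (filter p w) u y = on_left w u y.
Proof.
move=> Uw u0w u1w yw pu0 pu1 py.
by rewrite !on_leftE ?filter_uniq ?mem_filter ?pu0 ?pu1 ?py ?between_filter.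
Qed.

Lemma on_left_reflection w u y :
  uniq w -> (u, false) \in w -> (u, true) \in w -> other_end y \in w ->
  on_left (reflection w) u y = on_left w u (other_end y).
Proof.
move=> Uw u0w u1w yw.
by rewrite !on_leftE ?reflection_uniq ?mem_reflection ?between_reflection.
Qed.

End Chords.

Section ConformalModels.
Variables (V : finType) (adj : rel V) (side : V -> V -> bool).
Implicit Types (U : {set V}) (w : seq (V * bool)).

Record conformal U w : Prop := Conformal {
  conformal_uniq : uniq w;
  conformal_mem : forall y, (y \in w) = (y.1 \in U);
  conformal_cross : {in U &, forall u v, u != v -> crosses w u v = adj u v};
  conformal_side : {in U &, forall u v, u != v -> ~~ adj u v ->
                     forall b, on_left w u (v, b) = side u v} }.

Lemma mem_letters U y : (y \in letters U) = (y.1 \in U).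
Proof.
case: y => u b /=; apply/allpairsP/idP => [[[v c] /= [vU _ [-> _]]] | uU].
  by rewrite mem_enum in vU.
by exists (u, b); split; rewrite ?mem_enum //; case: b.
Qed.

Lemma letters_uniq U : uniq (letters U).
Proof. by apply: allpairs_uniq => [||[u b] [v c] _ _ /= [-> ->]]; rewrite ?enum_uniq. Qed.

Lemma conformalP U w : conformal_model adj side U w <-> conformal U w.
Proof.
split=> [[perm_w [cross_w side_w]] | [Uw mem_w cross_w side_w]].
  have Uw : uniq w by rewrite (perm_uniq perm_w) letters_uniq.
  have mem_w y : (y \in w) = (y.1 \in U) by rewrite (perm_mem perm_w) mem_letters.
  split=> // u v uU vU uv nadj b; move: (side_w u v uU vU uv nadj).
  rewrite !on_rightE ?mem_w //= 1?eq_sym //.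
  case: (side u v) => /andP [L0 L1]; case: b; by [rewrite L0 | rewrite L1 | exact/negbTE].
split.
  by apply: uniq_perm => // [|y]; [exact: letters_uniq | rewrite mem_w mem_letters].
split=> // u v uU vU uv nadj.
by rewrite !on_rightE ?mem_w //= 1?eq_sym // !side_w //; case: (side u v).
Qed.

Definition restrict U w := [seq y <- w | y.1 \in U].

Lemma conformal_restrict U w : conformal [set: V] w -> conformal U (restrict U w).
Proof.
case=> Uw mem_w cross_w side_w.
have letter_w y : y \in w by rewrite mem_w inE.
have on_left_restrict u v b : u \in U -> v \in U ->
    on_left (restrict U w) u (v, b) = on_left w u (v, b).
  by move=> uU vU; rewrite on_left_filter.
split=> [||u v uU vU uv|u v uU vU uv nadj b].
- exact: filter_uniq.
- by move=> y; rewrite mem_filter letter_w andbT.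
- by rewrite /crosses !on_left_restrict //; apply: cross_w; rewrite ?in_setT.
- by rewrite on_left_restrict // side_w ?in_setT.
Qed.

Section OneModel.
Variables (U : {set V}) (w : seq (V * bool)).
Hypothesis Cw : conformal U w.

Lemma conformal_letter y : y.1 \in U -> y \in w.
Proof. by rewrite (conformal_mem Cw). Qed.

Lemma conformal_on_leftE u y : u \in U -> y.1 \in U ->
  on_left w u y = between w (u, false) y (u, true).
Proof. by move=> uU yU; rewrite on_leftE ?(conformal_uniq Cw) ?conformal_letter. Qed.

Lemma conformal_crossesE u v : u \in U -> v \in U ->
  crosses w u v = separates w (u, false) (u, true) (v, false) (v, true).
Proof. by move=> uU vU; rewrite /crosses !conformal_on_leftE. Qed.

Lemma on_left_cross : {in U &, forall u v, u != v ->
  on_left w u (v, true) = on_left w u (v, false) (+) adj u v}.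
Proof.
move=> u v uU vU uv; rewrite -(conformal_cross Cw uU vU uv) /crosses.
by case: (on_left w u (v, true)); case: (on_left w u (v, false)).
Qed.

Lemma on_left_edge : {in U &, forall u v, u != v -> adj u v ->
  on_left w v (u, false) = ~~ on_left w u (v, false)}.
Proof.
move=> u v uU vU uv adj_uv; have := conformal_cross Cw uU vU uv.
rewrite adj_uv conformal_crossesE // !conformal_on_leftE //.
by apply: separates_between; rewrite ?conformal_letter ?letter_neq_end ?letter_neq.
Qed.

Lemma on_left_claw u v x : u \in U -> v \in U -> x \in U -> u != v -> u != x -> v != x ->
  adj u v -> adj u x -> ~~ adj v x ->
  on_left w u (v, false) (+) on_left w u (x, false) =
    (on_left w v (x, false) == on_left w x (v, false)).
Proof.
move=> uU vU xU uv ux vx adj_uv adj_ux nadj_vx.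
have Uw := conformal_uniq Cw; set s := rot (index (u, false) w) w.
have s_between y1 y2 y3 : y1.1 \in U -> y2.1 \in U -> y3.1 \in U ->
    between w y1 y2 y3 = between s y1 y2 y3.
  by move=> *; rewrite between_rot ?conformal_letter.
have s_neq y1 y2 : y1.1 \in U -> y2.1 \in U -> y1 != y2 -> index y1 s != index y2 s.
  by move=> *; rewrite (@index_eq _ s) // mem_rot conformal_letter.
have s_u0 : index (u, false) s = 0 by rewrite /s rot_index ?conformal_letter //= eqxx.
have s_pos y : y.1 \in U -> y.1 != u -> 0 < index y s.
  by case: y => y b /= yU yu; rewrite lt0n -s_u0 s_neq ?letter_neq.
have := conformal_cross Cw uU vU uv; have := conformal_cross Cw uU xU ux.
have := conformal_cross Cw vU xU vx.
rewrite adj_uv adj_ux (negbTE nadj_vx) !conformal_crossesE // !conformal_on_leftE //.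
have [vu xu] : v != u /\ x != u by rewrite !(eq_sym _ u).
rewrite /separates !s_between // /between s_u0 !cyc_ordered0 ?s_pos //.
move=> /negPn/eqP ncross_vx cross_ux cross_uv.
by apply: cyc_ordered_claw; rewrite ?s_pos ?s_neq ?letter_neq_end ?letter_neq.
Qed.

Lemma conformal_between_end y t : y.1 \in U -> t.1 \in U -> t.1 != y.1 ->
  between w y t (other_end y) = on_left w y.1 t (+) y.2.
Proof.
case: y => c [] /= cU tU tc; rewrite conformal_on_leftE ?addbF ?addbT //.
rewrite 2!between_rotl between_swap ?conformal_letter ?letter_neq_end ?fst_neq //.
by rewrite eq_sym.
Qed.

Lemma conformal_reflection : conformal U (reflection w).
Proof.
have Uw := conformal_uniq Cw.
have on_left_refl u v b : u \in U -> v \in U ->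
    on_left (reflection w) u (v, b) = on_left w u (v, ~~ b).
  by move=> uU vU; rewrite on_left_reflection ?conformal_letter.
split=> [||u v uU vU uv|u v uU vU uv nadj b].
- by rewrite reflection_uniq.
- by move=> y; rewrite mem_reflection (conformal_mem Cw).
- by rewrite /crosses !on_left_refl // eq_sym; exact: (conformal_cross Cw).
- by rewrite on_left_refl //; exact: (conformal_side Cw).
Qed.

Lemma on_left_reflection_edge : {in U &, forall u v, u != v -> adj u v ->
  on_left (reflection w) u (v, false) = ~~ on_left w u (v, false)}.
Proof.
move=> u v uU vU uv adj_uv.
rewrite on_left_reflection ?(conformal_uniq Cw) ?conformal_letter //.
by rewrite on_left_cross // adj_uv addbT.
Qed.

Lemma reflection_not_rot u v : u \in U -> v \in U -> u != v -> adj u v ->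
  ~ circ_equiv w (reflection w).
Proof.
move=> uU vU uv adj_uv [k refl_w]; have := on_left_reflection_edge uU vU uv adj_uv.
by rewrite refl_w on_left_rot ?(conformal_uniq Cw) ?conformal_letter //; case: on_left.
Qed.

End OneModel.
End ConformalModels.

Section PrimeGraphs.
Variables (V : finType) (adj : rel V).
Hypothesis adj_sym : symmetric adj.
Implicit Types (U X M S : {set V}).

Lemma module_adj X M x m1 m2 : is_module adj X M -> x \in X -> x \notin M ->
  m1 \in M -> m2 \in M -> adj x m1 = adj x m2.
Proof.
move=> [_ M_mod] xX xM m1M m2M; have /M_mod : x \in X :\: M by rewrite inE xM xX.
by case=> adj_xM; rewrite ?adj_xM // (negbTE (adj_xM _ m1M)) (negbTE (adj_xM _ m2M)).
Qed.

Lemma prime_cut_edge U S : prime_graph adj U -> S \subset U -> S != set0 -> S != U ->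
  exists c d, [/\ c \in S, d \in U :\: S & adj c d].
Proof.
move=> [U3 primeU] SU S0 SU'.
have [/existsP [c /andP [cS /existsP [d /andP [dUS cd]]]] | /existsPn no_edge] :=
  boolP [exists c in S, exists d in U :\: S, adj c d]; first by exists c, d.
have nadj c d : c \in S -> d \in U :\: S -> ~~ adj c d.
  by move=> cS dUS; move: (no_edge c); rewrite cS => /existsPn /(_ d); rewrite dUS.
have S_mod : is_module adj U S.
  by split=> // x /setDP [xU xS]; right=> m mS; rewrite adj_sym nadj // inE xS.
have T_mod : is_module adj U (U :\: S).
  split=> [|x]; first exact: subsetDl.
  by rewrite setDDr setDv set0U (setIidPr SU) => xS; right=> m; apply: nadj.
have card_split : #|S| + #|U :\: S| = #|U| by rewrite -(cardsID S U) (setIidPr SU).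
have S_pos : 0 < #|S| by rewrite card_gt0.
have [S1 | /eqP] := primeU S S_mod; last by rewrite (negbTE SU').
by have [T1 | T_U] := primeU _ T_mod; move: card_split; rewrite ?T_U; lia.
Qed.

Lemma prime_has_edge U : prime_graph adj U -> exists u v, [/\ u \in U, v \in U & adj u v].
Proof.
move=> primeU; have [U3 _] := primeU.
have [u uU] : exists u, u \in U by apply/card_gt0P; lia.
have [|||c [d [/set1P -> /setDP [dU _] ud]]] := prime_cut_edge primeU (S := [set u]).
- by rewrite sub1set.
- by apply/set0Pn; exists u; rewrite inE.
- by apply: contraTneq U3 => <-; rewrite cards1.
by exists u, d.
Qed.

Lemma prime_graph_im (f : V -> V) U : {in U &, injective f} ->
  {in U &, forall x y, x != y -> adj (f x) (f y) = adj x y} ->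
  prime_graph adj U -> prime_graph adj (f @: U).
Proof.
move=> f_inj f_adj [U3 primeU]; split=> [|X [X_fU X_mod]]; first by rewrite card_in_imset.
pose Y := U :&: f @^-1: X.
have fY : f @: Y = X.
  apply/setP => y; apply/imsetP/idP => [[x /setIP [_] ] | yX]; first by rewrite inE => fxX ->.
  have /imsetP [x xU y_fx] := subsetP X_fU y yX.
  by exists x; rewrite // /Y !inE xU -y_fx.
have cardY : #|Y| = #|X|.
  by rewrite -fY card_in_imset // => x y /setIP [xU _] /setIP [yU _]; apply: f_inj.
have Y_mod : is_module adj U Y.
  split=> [|y /setDP [yU yY]]; first exact: subsetIl.
  have fyX : f y \in f @: U :\: X.
    by rewrite inE imset_f // andbT; apply: contra yY => fyX; rewrite inE yU inE.
  have ym m : m \in Y -> y != m by move=> mY; apply: contraNneq yY => ->.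
  have [adj_fy | nadj_fy] := X_mod _ fyX; [left | right] => m mY;
    have /setIP [mU] := mY; rewrite inE -f_adj ?ym // => fmX; [exact: adj_fy | exact: nadj_fy].
have [Y1 | YU] := primeU Y Y_mod; first by left; rewrite -cardY.
by right; rewrite -fY YU.
Qed.

Section EdgeLabels.
Variables (U : {set V}) (P : V -> V -> bool).
Hypotheses (adj_irr : irreflexive adj) (primeU : prime_graph adj U).
Hypothesis P_sym : {in U &, forall y z, adj y z -> P y z = P z y}.
Hypothesis P_claw : {in U & &, forall y z z',
  adj y z -> adj y z' -> z != z' -> ~~ adj z z' -> P y z = P y z'}.

Definition odd_triangle a y z := [&& y \in U, z \in U, adj y z, adj a y, adj a z,
                                    P a y != P y z & P a z != P y z].

Lemma odd_triangle_sym a y z : odd_triangle a y z -> odd_triangle a z y.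
Proof.
case/and5P=> yU zU yz ay /and3P [az Pay Paz].
by rewrite /odd_triangle zU yU adj_sym yz az ay -(P_sym yU zU yz) Pay Paz.
Qed.

Lemma odd_triangle_extend a y z x : a \in U -> x \in U -> odd_triangle a y z ->
  adj x y -> ~~ adj x z -> odd_triangle a y x.
Proof.
move=> aU xU T_ayz xy nxz; have [-> // | xz] := eqVneq x z.
case/and5P: T_ayz => yU zU yz ay /and3P [az Pay Paz].
have [yx zx nzx] : [/\ adj y x, z != x & ~~ adj z x] by rewrite adj_sym eq_sym (adj_sym z).
have P_yzx : P y z = P y x := P_claw yU zU xU yz yx zx nzx.
have ax : adj a x.
  apply: contraNT Pay => nax; have ax' : a != x by apply: contraNneq nxz => <-.
  by rewrite (P_sym aU yU ay) P_yzx (P_claw yU aU xU) // adj_sym.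
have P_axz : P a x = P a z := P_claw aU xU zU ax az xz nxz.
by rewrite /odd_triangle yU xU yx ay ax -P_yzx P_axz Pay Paz.
Qed.

Lemma odd_triangle_module a b : a \in U -> b \in U -> adj a b ->
  is_module adj U [set z | connect (odd_triangle a) b z].
Proof.
move=> aU bU ab; pose reach := connect (odd_triangle a) b.
have reach_T y z : odd_triangle a y z -> reach y = reach z.
  move=> T_ayz; apply/idP/idP => reach_y.
    exact: connect_trans reach_y (connect1 T_ayz).
  exact: connect_trans reach_y (connect1 (odd_triangle_sym T_ayz)).
have reach_U : closed (odd_triangle a) (mem U) by move=> y z /and3P [-> -> _].
split=> [|x /setDP [xU]]; first by apply/subsetP => z; rewrite inE => /(closed_connect reach_U) <-.
rewrite inE -/reach => reach_x.
have adj_x_reach m : reach m -> adj x m = adj x b.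
  pose q := [pred t | reach t ==> (adj x t == adj x b)].
  have q_closed : closed (odd_triangle a) q.
    move=> y z T_ayz; rewrite !inE -(reach_T _ _ T_ayz); case: (boolP (reach y)) => //= reach_y.
    have [xy | nxy] := boolP (adj x y); have [xz | nxz] := boolP (adj x z) => //.
      by case/negP: reach_x; rewrite -(reach_T y x) // (odd_triangle_extend aU xU T_ayz).
    case/negP: reach_x; rewrite -(reach_T z x) -?(reach_T y z) //.
    exact: odd_triangle_extend aU xU (odd_triangle_sym T_ayz) xz nxy.
  move=> reach_m; have := closed_connect q_closed reach_m.
  by rewrite !inE reach_m (connect0 _ b : reach b) eqxx => /esym /eqP.
by have [xb | nxb] := boolP (adj x b); [left | right] => m; rewrite inE => /adj_x_reach ->.
Qed.

Lemma edge_label_triangle a b c : a \in U -> b \in U -> c \in U ->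
  adj a b -> adj a c -> adj b c -> P a b = P a c -> P b c = P a b.
Proof.
move=> aU bU cU ab ac bc Pabc; apply/eqP/negPn/negP => odd_bc.
have [_ primeU'] := primeU; have K_mod := odd_triangle_module aU bU ab.
set K := [set z | _] in K_mod.
have cK : c \in K.
  by rewrite inE connect1 // /odd_triangle bU cU bc ab ac -Pabc eq_sym odd_bc.
have aK : a \notin K.
  have adj_a_closed : closed (odd_triangle a) (adj a).
    by move=> y z /and5P [_ _ _ ay /andP [az _]]; rewrite !unfold_in ay az.
  rewrite inE; apply: contraFN (adj_irr a) => /(closed_connect adj_a_closed).
  by rewrite !unfold_in ab => <-.
have [K1 | KU] := primeU' K K_mod; last by move: aK; rewrite KU aU.
have K2 : 1 < #|K|.
  apply/card_gt1P; exists b, c; rewrite cK inE connect0; split=> //.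
  by apply: contraTneq bc => ->; rewrite adj_irr.
by move: K1; rewrite leqNgt K2.
Qed.

Lemma edge_label_neighbours x y z : x \in U -> y \in U -> z \in U ->
  adj x y -> adj x z -> P x y = P x z.
Proof.
move=> xU yU zU xy xz; have [-> // | yz] := eqVneq y z.
have [adj_yz | nadj_yz] := boolP (adj y z); last exact: P_claw.
have [yx zx zy] : [/\ adj y x, adj z x & adj z y] by rewrite !(adj_sym _ x) (adj_sym z).
have at_y := edge_label_triangle yU xU zU yx adj_yz xz.
have at_z := edge_label_triangle zU xU yU zx zy xy.
rewrite (P_sym yU xU yx) (P_sym zU xU zx) (P_sym zU yU zy) in at_y at_z.
have : (P x y == P y z) ==> (P x z == P x y) by apply/implyP => /eqP/at_y ->.
have : (P x z == P y z) ==> (P x y == P x z) by apply/implyP => /eqP/at_z ->.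
by case: (P x y); case: (P x z); case: (P y z).
Qed.

Lemma edge_label_const a b c d : a \in U -> b \in U -> c \in U -> d \in U ->
  adj a b -> adj c d -> P c d = P a b.
Proof.
move=> aU bU cU dU ab cd.
pose S := [set x in U | [forall t in U, adj x t ==> (P x t == P a b)]].
have S_edge x y : x \in S -> y \in U -> adj x y -> P x y = P a b.
  by case/setIdP => _ /forall_inP S_x yU xy; apply/eqP; move: (S_x y yU); rewrite xy.
have S_neighbours x y : x \in U -> y \in U -> adj x y -> P x y = P a b -> x \in S.
  move=> xU yU xy Pxy; rewrite inE xU; apply/forall_inP => t tU; apply/implyP => xt.
  by rewrite -Pxy (edge_label_neighbours xU tU yU xt xy).
have aS : a \in S := S_neighbours a b aU bU ab erefl.
suff SU : S = U by apply: S_edge; rewrite ?SU.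
apply/eqP; apply: contraT => SU.
have [||x [y [xS /setDP [yU yS] xy]]] := prime_cut_edge primeU _ _ SU.
- by apply/subsetP => x /setIdP [].
- by apply/set0Pn; exists a.
have xU : x \in U by case/setIdP: xS.
have yx : adj y x by rewrite adj_sym.
by case/negP: yS; apply: (S_neighbours y x) => //; rewrite (P_sym yU xU yx) S_edge.
Qed.
End EdgeLabels.
End PrimeGraphs.

Section Rigidity.
Variables (V : finType) (adj : rel V) (U : {set V}).
Hypotheses (adj_sym : symmetric adj) (primeU : prime_graph adj U).
Variables (s s' : seq (V * bool)).
Hypotheses (s_uniq : uniq s) (s'_uniq : uniq s').
Hypothesis mem_s : forall y, (y \in s) = (y.1 \in U).
Hypothesis mem_s' : forall y, (y \in s') = (y.1 \in U).
Hypothesis s'_cross :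
  {in U &, forall u v, adj u v -> separates s' (u, false) (u, true) (v, false) (v, true)}.
Hypothesis same_arcs : forall y x, y.1 \in U -> x.1 \in U -> x.1 != y.1 ->
  between s y x (other_end y) = between s' y x (other_end y).

Let in_s y : y.1 \in U -> y \in s. Proof. by rewrite mem_s. Qed.
Let in_s' y : y.1 \in U -> y \in s'. Proof. by rewrite mem_s'. Qed.

Let size_s' : size s' = size s.
Proof. by apply/perm_size/uniq_perm => // y; rewrite mem_s mem_s'. Qed.

Let same_arcs_other y x : y.1 \in U -> x.1 \in U -> x.1 != y.1 ->
  between s (other_end y) x y = between s' (other_end y) x y.
Proof. by move=> yU xU xy; rewrite -{2 4}(other_endK y) same_arcs. Qed.

(* No chord separates two letters consecutive in s, hence none separates them in s'. *)
Lemma consecutive_arc a z y : index z s = (index a s).+1 ->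
  a.1 \in U -> z.1 \in U -> y.1 \in U -> between s' a (other_end y) z = between s' a y z.
Proof.
move=> az aU zU yU.
have za : z != a by apply/eqP => E; move: az; rewrite E; lia.
have a_end : between s' a (other_end a) z = false.
  have [-> | z_oa] := eqVneq z (other_end a); first by rewrite between_xyy.
  have za1 : z.1 != a.1 by apply/eqP => /letter_cases []; apply/eqP.
  rewrite between_swap ?in_s' ?other_end_neq ?neq_other_end // 1?eq_sym //.
  by rewrite -same_arcs // between_next ?in_s ?other_end_neq // eq_sym.
have [/letter_cases [-> | ->] | ya] := eqVneq y.1 a.1.
- by rewrite a_end between_xxy.
- by rewrite other_endK a_end between_xxy.
have [yz | yz] := eqVneq y.1 z.1.
  have za1 : z.1 != a.1 by rewrite -yz.
  have z_end : between s' a (other_end z) z = false.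
    rewrite between_swap ?in_s' ?other_end_neq ?neq_other_end ?fst_neq // 1?eq_sym //.
    rewrite 2!between_rotl -same_arcs_other 1?eq_sym // between_rotl.
    by rewrite between_next ?in_s ?other_end_neq ?fst_neq.
  by case/letter_cases: yz => ->; rewrite ?other_endK z_end between_xyy.
have sep : ~~ separates s' y (other_end y) a z.
  rewrite /separates -!same_arcs 1?eq_sym // negbK.
  by rewrite (between_mid_next az) ?eqxx ?in_s ?fst_neq.
have az_neq : a != z by rewrite eq_sym.
rewrite separatesC ?in_s' ?neq_other_end ?az_neq ?fst_neq //= in sep.
by apply/eqP; rewrite eq_sym; move: sep; rewrite /separates negbK.
Qed.

Lemma same_arcs_nth_succ x0 j : j.+1 < size s -> nth x0 s j = nth x0 s' j ->
  nth x0 s j.+1 = nth x0 s' j.+1.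
Proof.
move=> lt_j1 eq_j; have lt_j := ltnW lt_j1.
set a := nth x0 s j; set z := nth x0 s j.+1; set c := nth x0 s' j.+1.
have [aU zU cU] : [/\ a.1 \in U, z.1 \in U & c.1 \in U].
  by rewrite -(mem_s a) -(mem_s z) -(mem_s' c) !mem_nth ?size_s'.
have az : index z s = (index a s).+1 by rewrite !index_uniq.
have ac : index c s' = (index a s').+1 by rewrite /a eq_j !index_uniq ?size_s'.
have za : z != a by apply/eqP => E; move: az; rewrite E; lia.
apply/eqP/negPn/negP => zc.
(* The arc of s' from a to z then contains c, not a, and both or no ends of every chord;
   its vertices form a cut of U that no edge crosses. *)
pose I y := between s' a y z.
have I_vertex y : y.1 \in U -> I (y.1, false) = I y.
  by case: y => u [] //= uU; apply: (consecutive_arc (y := (u, true)) az).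
pose S := [set u in U | I (u, false)].
have [|||u [v [/setIdP [uU Iu] /setDP [vU vS] uv]]] := prime_cut_edge adj_sym primeU (S := S).
- by apply/subsetP => u /setIdP [].
- apply/set0Pn; exists c.1; rewrite inE cU I_vertex //.
  by rewrite /I between_next ?in_s' // eq_sym.
- apply/eqP => SU; have := aU; rewrite -SU inE I_vertex //.
  by rewrite /I between_xxy andbF.
have nIv b : ~~ I (v, b).
  have : ~~ I (v, false) by move: vS; rewrite inE vU.
  by case: b => //; rewrite -(I_vertex (v, true)).
have Iu' : I (u, true) by rewrite -(I_vertex (u, true)).
have uv' : u != v by apply: contraNneq vS => <-; rewrite inE uU.
have := s'_cross uU vU uv; apply/negP.
by apply: (between_nonseparating (a := a) (z := z)); rewrite ?in_s' ?letter_neq //; apply: nIv.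
Qed.

Lemma same_arcs_eq x0 : nth x0 s 0 = nth x0 s' 0 -> s = s'.
Proof.
move=> eq0; apply: (eq_from_nth (x0 := x0)) => [|j]; first by rewrite size_s'.
by elim: j => // j IHj lt_j1; apply: same_arcs_nth_succ => //; apply/IHj/ltnW.
Qed.
End Rigidity.

Lemma rot_circ_equiv (V : finType) (w w' : seq (V * bool)) i i' :
  rot i w = rot i' w' -> circ_equiv w w'.
Proof.
move=> E; have size_w : size w' = size w by rewrite -(size_rot i w) E size_rot.
exists (rot_add w i (size w - i')); rewrite -rot_rot_add E.
by rewrite -size_w -(size_rot i' w') -/(rotr i' _) rotK.
Qed.

Section Dichotomy.
Variables (V : finType) (adj : rel V) (side : V -> V -> bool) (U : {set V}).
Hypotheses (adj_sym : symmetric adj) (adj_irr : irreflexive adj) (primeU : prime_graph adj U).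
Implicit Types w : seq (V * bool).

Let adj_neq {u v : V} : adj u v -> u != v.
Proof. by apply: contraTneq => ->; rewrite adj_irr. Qed.

Lemma conformal_on_left_eq w w' : conformal adj side U w -> conformal adj side U w' ->
  {in U &, forall u v, adj u v -> on_left w u (v, false) = on_left w' u (v, false)} ->
  forall u y, u \in U -> y.1 \in U -> y.1 != u -> on_left w u y = on_left w' u y.
Proof.
move=> Cw Cw' edges u [v b] uU /= vU vu; have uv : u != v by rewrite eq_sym.
have [adj_uv | nadj_uv] := boolP (adj u v).
  by case: b; rewrite ?(on_left_cross Cw) ?(on_left_cross Cw') ?edges.
by rewrite (conformal_side Cw) ?(conformal_side Cw').
Qed.

Lemma conformal_rigid w w' : conformal adj side U w -> conformal adj side U w' ->
  {in U &, forall u v, adj u v -> on_left w u (v, false) = on_left w' u (v, false)} ->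
  circ_equiv w w'.
Proof.
move=> Cw Cw' edges; have same := conformal_on_left_eq Cw Cw' edges.
have [U3 _] := primeU; have [u uU] : exists u, u \in U by apply/card_gt0P; lia.
pose s := rot (index (u, false) w) w; pose s' := rot (index (u, false) w') w'.
have mem_rotated x k y : conformal adj side U x -> (y \in rot k x) = (y.1 \in U).
  by move=> Cx; rewrite mem_rot (conformal_mem Cx).
have between_rotated x k y1 y2 y3 : conformal adj side U x ->
    y1.1 \in U -> y2.1 \in U -> y3.1 \in U ->
    between (rot k x) y1 y2 y3 = between x y1 y2 y3.
  by move=> Cx *; rewrite between_rot ?(conformal_uniq Cx) ?(conformal_letter Cx).
suff : s = s' by apply: rot_circ_equiv.
apply: (@same_arcs_eq _ adj U) (u, false) _ => //;
  rewrite ?rot_uniq ?(conformal_uniq Cw) ?(conformal_uniq Cw') //.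
- by move=> y; apply: mem_rotated.
- by move=> y; apply: mem_rotated.
- move=> x y xU yU xy; rewrite /separates !between_rotated //.
  by have := conformal_cross Cw' xU yU (adj_neq xy); rewrite xy (conformal_crossesE Cw').
- move=> y t yU tU ty; rewrite !between_rotated //.
  by rewrite (conformal_between_end Cw) ?(conformal_between_end Cw') ?same.
- by rewrite /s /s' !nth0 !rot_index ?(conformal_letter Cw) ?(conformal_letter Cw').
Qed.

Lemma on_left_claw_side w y z z' : conformal adj side U w -> y \in U -> z \in U -> z' \in U ->
  adj y z -> adj y z' -> z != z' -> ~~ adj z z' ->
  on_left w y (z, false) (+) on_left w y (z', false) = (side z z' == side z' z).
Proof.
move=> Cw yU zU z'U yz yz' zz' nzz'.
have [nz'z z'z] : ~~ adj z' z /\ z' != z by rewrite adj_sym eq_sym.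
rewrite -(conformal_side Cw zU z'U zz' nzz' false) -(conformal_side Cw z'U zU z'z nz'z false).
exact (on_left_claw Cw yU zU z'U (adj_neq yz) (adj_neq yz') zz' yz yz' nzz').
Qed.

Lemma conformal_dichotomy w1 w : conformal adj side U w1 -> conformal adj side U w ->
  circ_equiv w w1 \/ circ_equiv w (reflection w1).
Proof.
move=> C1 C; pose P y z := on_left w y (z, false) == on_left w1 y (z, false).
have P_sym : {in U &, forall y z, adj y z -> P y z = P z y}.
  move=> y z yU zU yz; rewrite /P (on_left_edge C yU zU) ?(on_left_edge C1 yU zU) ?adj_neq //.
  by case: (on_left w y _); case: (on_left w1 y _).
have P_claw : {in U & &, forall y z z',
    adj y z -> adj y z' -> z != z' -> ~~ adj z z' -> P y z = P y z'}.
  move=> y z z' yU zU z'U yz yz' zz' nzz'.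
  have := on_left_claw_side C yU zU z'U yz yz' zz' nzz'.
  rewrite -(on_left_claw_side C1 yU zU z'U yz yz' zz' nzz') /P.
  by case: (on_left w y (z, false)); case: (on_left w y (z', false));
    case: (on_left w1 y (z, false)); case: (on_left w1 y (z', false)).
have [u [v [uU vU uv]]] := prime_has_edge adj_sym primeU.
have P_const c d : c \in U -> d \in U -> adj c d -> P c d = P u v.
  by move=> cU dU cd; apply: (edge_label_const adj_sym adj_irr primeU P_sym P_claw).
have [Puv | nPuv] := boolP (P u v); [left | right].
  apply: conformal_rigid => // c d cU dU cd.
  by apply/eqP; rewrite -/(P c d) P_const.
apply: conformal_rigid (conformal_reflection C1) _ => // c d cU dU cd.
rewrite (on_left_reflection_edge C1) ?adj_neq //.
by move: nPuv; rewrite -(P_const c d) // /P; case: (on_left w c _); case: (on_left w1 c _).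
Qed.
End Dichotomy.

Section ModularDecomposition.
Variables (V : finType) (adj : rel V).
Hypothesis adj_sym : symmetric adj.
Implicit Types (Q M W : {set V}).

Lemma singleton_strong x : strong_module adj [set x].
Proof.
split; first by apply/set0Pn; exists x; rewrite inE.
split=> [|M [_ M_mod]].
  split=> [|y _]; first exact: subsetT.
  by have [xy | nxy] := boolP (adj y x); [left | right] => m /set1P ->.
have [xM | xM] := boolP (x \in M); first by right; right; rewrite sub1set.
by left; apply/setP => y; rewrite !inE; apply: contraNF xM => /andP [yM /eqP <-].
Qed.

Lemma child_eq Q M1 M2 x : child adj Q M1 -> child adj Q M2 -> x \in M1 -> x \in M2 -> M1 = M2.
Proof.
move=> [sM1 [M1Q max1]] [sM2 [M2Q max2]] xM1 xM2.
have [_ [M1_mod _]] := sM1; have [_ [_ overlap2]] := sM2.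
have [M12_0 | [M12 | M21]] := overlap2 M1 M1_mod.
- by move/setP/(_ x): M12_0; rewrite !inE xM1 xM2.
- apply/eqP; apply: contraT => ne; case: max1.
  by exists M2; rewrite properEneq ne M12.
- apply/eqP; apply: contraT => ne; case: max2.
  by exists M1; rewrite properEneq eq_sym ne M21.
Qed.

Lemma strong_sub_child Q M : strong_module adj M -> M \proper Q ->
  exists2 C, child adj Q C & M \subset C.
Proof.
have [n] := ubnP (#|Q| - #|M|); elim: n M => // n IHn M lt_n sM MQ.
have [[M' [sM' [MM' M'Q]]] | maxM] :=
  classic (exists M', strong_module adj M' /\ M \proper M' /\ M' \proper Q).
  have [|C cC M'C] := IHn M' _ sM' M'Q.
    by move: (proper_card MM') (proper_card M'Q) lt_n; lia.
  by exists C => //; apply: subset_trans (proper_sub MM') M'C.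
by exists M => //; do !split.
Qed.

Definition same_child Q y z := exists M, [/\ child adj Q M, y \in M & z \in M].

Lemma transversal_rep Q W y : child_transversal adj Q W -> 2 <= #|Q| -> y \in Q ->
  exists2 z, z \in W & same_child Q y z.
Proof.
move=> [_ W_tr] Q2 yQ.
have [|C cC] := strong_sub_child (singleton_strong y) (_ : [set y] \proper Q).
  by rewrite properEcard sub1set yQ cards1.
rewrite sub1set => yC; have /eqP/cards1P [z WC] := W_tr C cC.
have /setIP [zW zC] : z \in W :&: C by rewrite WC inE.
by exists z => //; exists C.
Qed.

Lemma same_child_transversal Q W y z z' : child_transversal adj Q W ->
  same_child Q y z -> same_child Q y z' -> z \in W -> z' \in W -> z = z'.
Proof.
move=> [_ W_tr] [C [cC yC zC]] [C' [cC' yC' z'C']] zW z'W.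
rewrite -(child_eq cC cC' yC yC') in z'C'.
have /eqP/cards1P [t WC] := W_tr C cC.
have in_t a : a \in W -> a \in C -> a = t by move=> aW aC; apply/set1P; rewrite -WC inE aW aC.
by rewrite (in_t z zW zC) (in_t z' z'W z'C').
Qed.

Lemma same_child_adj Q y y' z z' : ~ same_child Q y y' ->
  same_child Q y z -> same_child Q y' z' -> adj z z' = adj y y'.
Proof.
move=> not_same [C [cC yC zC]] [C' [cC' y'C' z'C']].
have disj t : t \in C -> t \in C' -> False.
  by move=> tC tC'; apply: not_same; exists C'; split; rewrite // -(child_eq cC cC' tC tC').
have [[_ [C_mod _]] _] := cC; have [[_ [C'_mod _]] _] := cC'.
have y'C : y' \notin C by apply/negP => /disj; apply.
have zC' : z \notin C' by apply/negP => /(disj z zC).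
rewrite (module_adj C'_mod (in_setT z) zC' z'C' y'C') adj_sym.
by rewrite (module_adj C_mod (in_setT y') y'C zC yC) adj_sym.
Qed.

Lemma transversal_prime Q U U' : child_transversal adj Q U -> child_transversal adj Q U' ->
  prime_graph adj U' -> prime_graph adj U.
Proof.
move=> U_tr U'_tr primeU'; have [UQ _] := U_tr; have [U'Q _] := U'_tr.
have Q2 : 2 <= #|Q| by have [U'3 _] := primeU'; move: (subset_leq_card U'Q); lia.
have same_sym y z : same_child Q y z -> same_child Q z y by case=> C [cC yC zC]; exists C.
pose f y := epsilon (inhabits y) (fun z => z \in U /\ same_child Q y z).
have fP y : y \in Q -> f y \in U /\ same_child Q y (f y).
  move=> yQ; apply: (epsilon_spec (inhabits y) (fun z => z \in U /\ same_child Q y z)).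
  by have [z zU yz] := transversal_rep U_tr Q2 yQ; exists z.
have fP' y : y \in U' -> f y \in U /\ same_child Q (f y) y.
  by move=> yU'; have [fyU /same_sym] := fP y (subsetP U'Q y yU').
have fU : f @: U' = U.
  apply/setP => z; apply/imsetP/idP => [[y /fP' [fyU _] ->] // | zU].
  have [y yU' zy] := transversal_rep U'_tr Q2 (subsetP UQ z zU).
  have [fyU fyy] := fP' y yU'; exists y => //.
  by apply: (same_child_transversal U_tr) (same_sym _ _ zy) _ zU fyU; apply: same_sym.
rewrite -fU; apply: prime_graph_im primeU' => [y y' yU' y'U' fyy' | y y' yU' y'U' yy'].
  have [_ fy_y] := fP' y yU'; have [_] := fP' y' y'U'; rewrite -fyy' => fy_y'.
  exact: (same_child_transversal U'_tr) fy_y fy_y' yU' y'U'.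
have [[_ y_fy] [_ y'_fy']] := (fP y (subsetP U'Q y yU'), fP y' (subsetP U'Q y' y'U')).
have same_yy : same_child Q y y by case: y_fy => C [cC yC _]; exists C.
apply: same_child_adj y_fy y'_fy' => same_yy'; case/eqP: yy'.
exact: (same_child_transversal U'_tr) same_yy same_yy' yU' y'U'.
Qed.

End ModularDecomposition.


Theorem mainTheorem1 (V : finType) (adj : rel V) (side : V -> V -> bool)
  (adj_sym : symmetric adj) (adj_irr : irreflexive adj)
  (hmodel : exists w, conformal_model adj side [set: V] w)
  (Q U : {set V}) (hQ : prime_node adj Q) (hU : child_transversal adj Q U) :
  prime_graph adj U /\
  exists w1 w2,
    [/\ conformal_model adj side U w1,
        conformal_model adj side U w2,
        ~ circ_equiv w1 w2,
        circ_equiv w2 (reflection w1) &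
        forall w, conformal_model adj side U w ->
          circ_equiv w w1 \/ circ_equiv w w2].
Proof.
have [_ [U' [U'_tr primeU']]] := hQ.
have primeU : prime_graph adj U := transversal_prime adj_sym hU U'_tr primeU'.
split=> //; have [w0 /conformalP /(conformal_restrict U) C1] := hmodel.
have [u [v [uU vU adj_uv]]] := prime_has_edge adj_sym primeU.
have uv : u != v by apply: contraTneq adj_uv => ->; rewrite adj_irr.
exists (restrict U w0), (reflection (restrict U w0)); split.
- exact/conformalP.
- exact/conformalP/conformal_reflection.
- exact (reflection_not_rot C1 uU vU uv adj_uv).
- by exists 0; rewrite rot0.
- move=> w /conformalP C; exact (conformal_dichotomy adj_sym adj_irr primeU C1 C).
Qed.
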